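(* Let $R$ be a ring and $M$ a retractable left $R$-module. The following are equivalent: (a) $M$ is uniform and $\mathrm{End}_R(M)$ is a domain; (b) $M$ is uniform and every nonzero endomorphism of $M$ is injective; (c) $\mathrm{End}_R(M)$ is a left Ore domain.
   Context: A left $R$-module $M$ is retractable if $\mathrm{Hom}_R(M,N)\neq0$ for every nonzero submodule $N\subseteq M$. $M$ is uniform if any two nonzero submodules have nonzero intersection. A left Ore domain is a domain $S$ with $Sa\cap Sb\neq0$ for all nonzero $a,b\in S$. Endomorphisms are written on the right, so composition $fg$ means first $f$ then $g$. *)

From HB Require Import structures.
From mathcomp Require Import all_boot all_algebra.
Set Implicit Arguments. Unset Strict Implicit. Unset Printing Implicit Defensive.
Import GRing.Theory.
Local Open Scope ring_scope.

(* Following the paper, endomorphisms act on the right, so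
   the product  f g  in End_R(M) is the function  g \o f  (first f then g). *)

Definition is_endo (R : pzRingType) (M : lmodType R) (f : M -> M) : Prop :=
  forall (a : R) (x y : M), f (a *: x + y) = a *: f x + f y.

Definition nonzero_map (R : pzRingType) (M : lmodType R) (f : M -> M) : Prop :=
  exists x : M, f x <> 0.

Definition endo_mul (R : pzRingType) (M : lmodType R) (f g : M -> M) : M -> M :=
  fun x => g (f x).

Definition is_submodule (R : pzRingType) (M : lmodType R) (N : M -> Prop) : Prop :=
  N 0 /\ forall (a : R) (x y : M), N x -> N y -> N (a *: x + y).

Definition nonzero_submodule (R : pzRingType) (M : lmodType R) (N : M -> Prop) : Prop :=
  exists x : M, N x /\ x <> 0.

(* M is retractable: Hom_R(M,N) <> 0 for every nonzero submodule N.
   A homomorphism M -> N is identified with an endomorphism of M with image in N. *)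
Definition retractable (R : pzRingType) (M : lmodType R) : Prop :=
  forall N : M -> Prop, is_submodule N -> nonzero_submodule N ->
    exists f : M -> M, is_endo f /\ (forall x, N (f x)) /\ nonzero_map f.

Definition uniform (R : pzRingType) (M : lmodType R) : Prop :=
  (exists x : M, x <> 0) /\
  forall N1 N2 : M -> Prop, is_submodule N1 -> is_submodule N2 ->
    nonzero_submodule N1 -> nonzero_submodule N2 ->
    exists x : M, N1 x /\ N2 x /\ x <> 0.

Definition End_domain (R : pzRingType) (M : lmodType R) : Prop :=
  nonzero_map (@id M) /\
  forall f g : M -> M, is_endo f -> is_endo g -> nonzero_map f -> nonzero_map g ->
    nonzero_map (endo_mul f g).

(* End_R(M) is a left Ore domain: a domain with  S a \cap S b <> 0  for all
   nonzero a, b, i.e. there are s, t in S with  s a = t b <> 0. *)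
Definition End_left_Ore_domain (R : pzRingType) (M : lmodType R) : Prop :=
  End_domain M /\
  forall a b : M -> M, is_endo a -> is_endo b -> nonzero_map a -> nonzero_map b ->
    exists s t : M -> M, is_endo s /\ is_endo t /\
      (forall x, endo_mul s a x = endo_mul t b x) /\ nonzero_map (endo_mul s a).

(* Retractability turns every nonzero submodule into the image of a nonzero
   endomorphism. Hence a nonzero kernel would give a zero product [g f]
   (domain => injective), and a nonzero intersection of the images of [a] and
   [b] gives a common left multiple [s a = t b], where [s] and [t] exist
   because [a] and [b] are injective (uniform => Ore). Conversely the images of
   [s f1 = t f2] lie in both submodules [N1] and [N2] picked out by [f1], [f2]
   (Ore => uniform). *)

From HB Require Import structures.
From mathcomp Require Import all_boot all_algebra.
From Stdlib Require Import ClassicalEpsilon.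
Import GRing.Theory.
Local Open Scope ring_scope.

Set Implicit Arguments.

Section EndoRing.
Variables (R : pzRingType) (M : lmodType R).

Definition endo_kernel (f : M -> M) : M -> Prop := fun x => f x = 0.
Definition endo_image (f : M -> M) : M -> Prop := fun y => exists u, y = f u.
Definition submoduleI (N1 N2 : M -> Prop) : M -> Prop := fun x => N1 x /\ N2 x.

Lemma endoB (f : M -> M) : is_endo f -> forall x y, f (x - y) = f x - f y.
Proof.
move=> hf x y; have := hf (-1) y x.
by rewrite !scaleN1r [- y + x]addrC [- f y + _]addrC.
Qed.

Lemma endo0 (f : M -> M) : is_endo f -> f 0 = 0.
Proof. by move=> hf; have := endoB hf 0 0; rewrite !subrr. Qed.

Lemma kernel_submodule (f : M -> M) : is_endo f -> is_submodule (endo_kernel f).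
Proof.
move=> hf; split; first exact: endo0.
by move=> a x y hx hy; rewrite /endo_kernel hf hx hy scaler0 addr0.
Qed.

Lemma image_submodule (f : M -> M) : is_endo f -> is_submodule (endo_image f).
Proof.
move=> hf; split; first by exists 0; rewrite endo0.
by move=> a _ _ [u ->] [v ->]; exists (a *: u + v); rewrite hf.
Qed.

Lemma image_nonzero (f : M -> M) : nonzero_map f -> nonzero_submodule (endo_image f).
Proof. by case=> u hu; exists (f u); split => //; exists u. Qed.

Lemma submoduleI_submodule (N1 N2 : M -> Prop) :
  is_submodule N1 -> is_submodule N2 -> is_submodule (submoduleI N1 N2).
Proof.
move=> [N10 hN1] [N20 hN2]; split; first by [].
by move=> a x y [hx1 hx2] [hy1 hy2]; split; [apply: hN1 | apply: hN2].
Qed.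

Lemma kernel_nonzero (f : M -> M) (x y : M) :
  is_endo f -> f x = f y -> x != y -> nonzero_submodule (endo_kernel f).
Proof.
move=> hf hxy hne; exists (x - y); split.
  by rewrite /endo_kernel endoB // hxy subrr.
by apply/eqP; rewrite subr_eq0.
Qed.

Lemma retractable_End_domain_injective : retractable M -> End_domain M ->
  forall f : M -> M, is_endo f -> nonzero_map f -> injective f.
Proof.
move=> hM [_ hD] f hf hfnz x y hxy; case: (eqVneq x y) => // hne; exfalso.
have [g [hg [hgker hgnz]]] :=
  hM _ (kernel_submodule hf) (@kernel_nonzero _ _ _ hf hxy hne).
have [z hz] := hD g f hg hf hgnz hfnz.
exact: hz (hgker z).
Qed.

Lemma injective_End_domain : (exists x : M, x <> 0) ->
  (forall f : M -> M, is_endo f -> nonzero_map f -> injective f) -> End_domain M.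
Proof.
move=> [x hx] hI; split; first by exists x.
move=> f g hf hg [y hy] hgnz; exists y; rewrite /endo_mul => hgfy.
by apply: hy; apply: (hI g hg hgnz); rewrite hgfy endo0.
Qed.

(* An endomorphism [h] whose image lies in that of an injective [a] factors as
   [h = s a]; [s] is linear because [a] is injective. *)
Lemma endo_factor_injective (a h : M -> M) :
  is_endo a -> injective a -> is_endo h -> (forall x, endo_image a (h x)) ->
  exists s : M -> M, is_endo s /\ forall x, h x = a (s x).
Proof.
move=> ha ainj hh hha.
have pick x : {u | h x = a u} := constructive_indefinite_description _ (hha x).
exists (fun x => sval (pick x)); split => [r x y|x]; last by case: (pick x).
by apply: ainj; rewrite ha; do 3 case: (pick _) => ? <-; rewrite hh.
Qed.

Lemma uniform_injective_left_Ore : retractable M -> uniform M ->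
  (forall f : M -> M, is_endo f -> nonzero_map f -> injective f) ->
  forall a b : M -> M, is_endo a -> is_endo b -> nonzero_map a -> nonzero_map b ->
    exists s t : M -> M, is_endo s /\ is_endo t /\
      (forall x, endo_mul s a x = endo_mul t b x) /\ nonzero_map (endo_mul s a).
Proof.
move=> hM [_ hU] hI a b ha hb hna hnb.
have subA := image_submodule ha; have subB := image_submodule hb.
have [y [hya [hyb hy0]]] := hU _ _ subA subB (image_nonzero hna) (image_nonzero hnb).
have [h [hh [hhN [x hx]]]] :=
  hM _ (submoduleI_submodule subA subB) (ex_intro _ y (conj (conj hya hyb) hy0)).
have [s [hs hsa]] := endo_factor_injective ha (hI a ha hna) hh (fun x => (hhN x).1).
have [t [ht htb]] := endo_factor_injective hb (hI b hb hnb) hh (fun x => (hhN x).2).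
exists s, t; do 3 split => //.
  by move=> z; rewrite /endo_mul -hsa -htb.
by exists x; rewrite /endo_mul -hsa.
Qed.

Lemma left_Ore_uniform : retractable M -> End_left_Ore_domain M -> uniform M.
Proof.
move=> hM [[[x hx] _] hO]; split; first by exists x.
move=> N1 N2 s1 s2 n1 n2.
have [f1 [hf1 [hf1N hf1nz]]] := hM N1 s1 n1.
have [f2 [hf2 [hf2N hf2nz]]] := hM N2 s2 n2.
have [s [t [_ [_ [hst [z hz]]]]]] := hO f1 f2 hf1 hf2 hf1nz hf2nz.
exists (f1 (s z)); do 2 split => //; rewrite [f1 _]hst; exact: hf2N.
Qed.

End EndoRing.

Theorem proposition3p1 (R : pzRingType) (M : lmodType R) (hM : retractable M) :
  (uniform M /\ End_domain M <->
   uniform M /\ (forall f : M -> M, is_endo f -> nonzero_map f -> injective f)) /\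
  (uniform M /\ (forall f : M -> M, is_endo f -> nonzero_map f -> injective f) <->
   End_left_Ore_domain M).
Proof.
split; split.
- by move=> [hU hD]; split => //; exact: retractable_End_domain_injective.
- by move=> [hU hI]; split => //; exact: injective_End_domain hU.1 hI.
- move=> [hU hI]; split; first exact: injective_End_domain hU.1 hI.
  exact: uniform_injective_left_Ore.
- move=> hO; have hU := left_Ore_uniform hM hO.
  by split => //; apply: retractable_End_domain_injective hM hO.1.
Qed.
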